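(* Let $\mathcal{C}\subseteq[1,k]$ be a minimal core. Then there exist words $v_1,\dots,v_m\in\Sigma^*$ and words $u_1,\dots,u_m$, with $u_j$ $v_j$-minimal for each $j$, such that $\mathcal{C}\subseteq\mathrm{supp}(u_1)\cup\dots\cup\mathrm{supp}(u_m)$; that is, there is a family of minimal sections covering $\mathcal{C}$.
   Context: Let $\mathcal{A}=\langle Q,\Sigma,\delta\rangle$ be a synchronizing automaton with $n$ states $q_1,\dots,q_n$. Each word acts linearly on $\mathbb{C}Q$ by $q\mapsto q\cdot u$, preserving $w^\perp=\{x:\langle x,q_1+\dots+q_n\rangle=0\}$; let $\rho:\Sigma^*\to\mathbb{M}_{n-1}(\mathbb{C})$ be the induced representation and $\mathcal{R}$ the $\mathbb{C}$-algebra generated by $\rho(\Sigma^* )$. Write $\mathcal{R}/\mathrm{Rad}(\mathcal{R})\cong\prod_{i=1}^k\mathbb{M}_{n_i}(\mathbb{C})$ (Jacobson radical, Wedderburn–Artin) and let $\theta_i:\Sigma^*\to\mathbb{M}_{n_i}(\mathbb{C})$ be $\rho$ followed by the quotient map and the $i$-th projection; $0_i$ is the zero matrix. The support of a word $z$ is $\mathrm{supp}(z)=\{i:\theta_i(z)\neq0_i\}$. For $v\in\Sigma^*$, a word $u\in\Sigma^*v\Sigma^*$ is $v$-minimal, and $\mathrm{supp}(u)$ is a minimal section, if $\mathrm{supp}(u)\neq\emptyset$ and there is no $z\in\Sigma^*v\Sigma^*$ with $\emptyset\neq\mathrm{supp}(z)\subsetneq\mathrm{supp}(u)$. A subset $T\subseteq[1,k]$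 is a core if every word $x$ with $\theta_i(x)=0_i$ for all $i\in T$ satisfies $\theta_i(x)=0_i$ for all $i\in[1,k]$; a minimal core is a core minimal with respect to inclusion. *)

(* The complex field C is modelled by algC (MathComp's
   algebraically closed field of characteristic 0). *)
From HB Require Import structures.
From mathcomp Require Import all_boot all_order all_algebra.
From mathcomp Require Import algC.
Set Implicit Arguments. Unset Strict Implicit. Unset Printing Implicit Defensive.
Import Order.TTheory GRing.Theory Num.Theory.
Local Open Scope ring_scope.

(* An automaton with states 'I_n.+1 (so the paper's "n" is n.+1 here and
   the dimension of w^perp is n), alphabet Sigma, transition delta a q = q.a. *)

Definition act (Sigma : finType) (n : nat) (delta : Sigma -> 'I_n.+1 -> 'I_n.+1)
  (q : 'I_n.+1) (u : seq Sigma) : 'I_n.+1 :=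
  foldl (fun q a => delta a q) q u.

Definition synchronizing (Sigma : finType) (n : nat)
  (delta : Sigma -> 'I_n.+1 -> 'I_n.+1) : Prop :=
  exists w : seq Sigma, forall q q' : 'I_n.+1, act delta q w = act delta q' w.

(* The representation rho on w^perp, written in the basis
   f_i = q_i - q_last (i < n) of w^perp, acting on row vectors:
   f_i . u = q_{i.u} - q_{last.u} = f_{i.u} - f_{last.u}, with f_last := 0. *)
Definition rho (Sigma : finType) (n : nat) (delta : Sigma -> 'I_n.+1 -> 'I_n.+1)
  (u : seq Sigma) : 'M[algC]_n :=
  \matrix_(i < n, j < n)
     (((j : nat) == (act delta (widen_ord (leqnSn n) i) u : nat))%:R
      - ((j : nat) == (act delta ord_max u : nat))%:R).

(* The C-algebra generated by rho(Sigma^* ): since rho(Sigma^* ) is a monoid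
   containing the identity, this is the C-linear span of rho(Sigma^* ). *)
Definition in_alg (Sigma : finType) (n : nat) (delta : Sigma -> 'I_n.+1 -> 'I_n.+1)
  (A : 'M[algC]_n) : Prop :=
  exists (s : seq (algC * seq Sigma)),
    A = \sum_(p <- s) p.1 *: rho delta p.2.

Definition in_rad (Sigma : finType) (n : nat) (delta : Sigma -> 'I_n.+1 -> 'I_n.+1)
  (A : 'M[algC]_n) : Prop :=
  in_alg delta A /\
  forall r : 'M[algC]_n, in_alg delta r -> (1%:M - r *m A) \in unitmx.

(* Phi = (Phi_i)_i : R -> prod_i M_{d i}(C) is a surjective C-algebra morphism
   with kernel Rad(R), i.e. it induces R/Rad(R) ~ prod_i M_{d i}(C). *)
Definition wedderburn_data (Sigma : finType) (n : nat)
  (delta : Sigma -> 'I_n.+1 -> 'I_n.+1) (k : nat) (d : 'I_k -> nat)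
  (Phi : forall i : 'I_k, 'M[algC]_n -> 'M[algC]_(d i)) : Prop :=
  [/\ forall i, (0 < d i)%N,
      forall i, Phi i 1%:M = 1%:M,
      (forall i (c : algC) A B, in_alg delta A -> in_alg delta B ->
         Phi i (c *: A + B) = c *: Phi i A + Phi i B) /\
      (forall i A B, in_alg delta A -> in_alg delta B ->
         Phi i (A *m B) = Phi i A *m Phi i B),
      (forall Bs : forall i : 'I_k, 'M[algC]_(d i),
         exists2 A, in_alg delta A & forall i, Phi i A = Bs i)
    & (forall A, in_alg delta A -> ((forall i, Phi i A = 0) <-> in_rad delta A))].

Definition theta (Sigma : finType) (n : nat) (delta : Sigma -> 'I_n.+1 -> 'I_n.+1)
  (k : nat) (d : 'I_k -> nat)
  (Phi : forall i : 'I_k, 'M[algC]_n -> 'M[algC]_(d i))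
  (i : 'I_k) (u : seq Sigma) : 'M[algC]_(d i) :=
  Phi i (rho delta u).

Section Sections.
Variables (Sigma : finType) (k : nat) (d : 'I_k -> nat).
Variable th : forall i : 'I_k, seq Sigma -> 'M[algC]_(d i).

Definition supp (z : seq Sigma) : {set 'I_k} := [set i | th i z != 0].

Definition has_factor (v u : seq Sigma) : Prop :=
  exists x y : seq Sigma, u = x ++ v ++ y.

Definition v_minimal (v u : seq Sigma) : Prop :=
  [/\ has_factor v u, supp u != set0 &
      ~ exists z, [/\ has_factor v z, supp z != set0 & supp z \proper supp u]].

Definition is_core (T : {set 'I_k}) : Prop :=
  forall x : seq Sigma, (forall i, i \in T -> th i x = 0) -> forall i, th i x = 0.

Definition minimal_core (C : {set 'I_k}) : Prop :=
  is_core C /\ forall T : {set 'I_k}, T \proper C -> ~ is_core T.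
End Sections.

(* Fix i in the minimal core C.  As C :\ i is not a core, some word x
   vanishes on C :\ i but not everywhere.  Shrinking supports among the words
   having x as a factor gives an x-minimal word u with supp u \subset supp x.
   Since C is a core, supp u meets C, and the only index of C where x does
   not vanish is i, so i lies in the minimal section supp u. *)
From HB Require Import structures.
From mathcomp Require Import all_boot all_order all_algebra.
From mathcomp Require Import algC.
From Stdlib Require Import Classical.
Import Order.TTheory GRing.Theory Num.Theory.
Local Open Scope ring_scope.

Lemma cover_by_finite_family (I : finType) (T : eqType) (Q : T -> Prop)
    (F : T -> {set I}) (A : {set I}) :
  (forall i, i \in A -> exists2 p, Q p & i \in F p) ->
  exists s : seq T, (forall p, p \in s -> Q p) /\ A \subset \bigcup_(p <- s) F p.
Proof.
move=> covA.
suff [s Qs sub_s] : exists2 s : seq T, (forall p, p \in s -> Q p)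
    & {subset enum A <= \bigcup_(p <- s) F p}.
  by exists s; split=> //; apply/subsetP=> i iA; rewrite sub_s ?mem_enum.
have : {subset enum A <= A} by move=> i; rewrite mem_enum.
elim: (enum A) => [|a r IH] rA; first by exists [::].
have [s Qs sub_s] : exists2 s : seq T, (forall p, p \in s -> Q p)
    & {subset r <= \bigcup_(p <- s) F p}.
  by apply: IH => i ir; apply: rA; rewrite inE ir orbT.
have [p Qp Fp] := covA a (rA a (mem_head a r)).
exists (p :: s) => [q|i]; first by rewrite inE => /predU1P[->|/Qs].
by rewrite big_cons inE in_setU => /predU1P[->|/sub_s ->]; rewrite ?Fp ?orbT.
Qed.

Section MinimalSections.
Variables (Sigma : finType) (k : nat) (d : 'I_k -> nat).
Variable th : forall i : 'I_k, seq Sigma -> 'M[algC]_(d i).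

Lemma has_factor_refl (v : seq Sigma) : has_factor v v.
Proof. by exists [::], [::]; rewrite cats0. Qed.

Lemma mem_supp (x : seq Sigma) (i : 'I_k) : (i \in supp th x) = (th i x != 0).
Proof. by rewrite inE. Qed.

Lemma supp_eq0 (x : seq Sigma) : (supp th x == set0) = [forall i, th i x == 0].
Proof.
apply/eqP/forallP=> [x0 i|x0]; last by apply/setP=> i; rewrite mem_supp x0 in_set0.
by apply: contraFT (in_set0 i); rewrite -x0 mem_supp.
Qed.

Lemma exists_v_minimal_subset {v z : seq Sigma} :
  has_factor v z -> supp th z != set0 ->
  exists2 u, v_minimal th v u & supp th u \subset supp th z.
Proof.
have [m] := ubnP #|supp th z|; elim: m z => // m IH z /ltnSE le_zm vz nz.
case: (classic (exists z', [/\ has_factor v z', supp th z' != set0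
                              & supp th z' \proper supp th z])).
  move=> [z' [vz' nz' lt_z'z]].
  have [|u min_u le_uz'] := IH z' _ vz' nz'.
    exact: leq_trans (proper_card lt_z'z) le_zm.
  by exists u => //; apply: subset_trans le_uz' (proper_sub lt_z'z).
by exists z.
Qed.

Lemma core_meets_supp {C : {set 'I_k}} {x : seq Sigma} :
  is_core th C -> supp th x != set0 -> C :&: supp th x != set0.
Proof.
move=> coreC; apply: contraNN => /eqP Cx0; rewrite supp_eq0.
apply/forallP=> i; apply/eqP; move: i; apply: coreC => i iC; apply/eqP.
by apply: contraFT (in_set0 i); rewrite -Cx0 inE iC mem_supp.
Qed.

Lemma not_core_witness {T : {set 'I_k}} :
  ~ is_core th T ->
  exists2 x, (forall j, j \in T -> th j x = 0) & supp th x != set0.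
Proof.
move=> /not_all_ex_not[x not_core_x].
have [Tx0 /not_all_ex_not[i xi]] := imply_to_and _ _ not_core_x.
by exists x => //; rewrite supp_eq0; apply/forallP=> /(_ i)/eqP.
Qed.

Lemma minimal_core_section {C : {set 'I_k}} {i : 'I_k} :
  minimal_core th C -> i \in C ->
  exists2 p : seq Sigma * seq Sigma, v_minimal th p.1 p.2 & i \in supp th p.2.
Proof.
move=> [coreC minC] iC.
have [x Cx0 nx] := not_core_witness (minC _ (properD1 iC)).
have [u min_u le_ux] := exists_v_minimal_subset (has_factor_refl x) nx.
exists (x, u) => //=; have [_ u_nz _] := min_u.
have /set0Pn[j /setIP[jC ju]] := core_meets_supp coreC u_nz.
have [-> // | ij] := eqVneq i j.
have : th j x != 0 by rewrite -mem_supp (subsetP le_ux).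
by rewrite Cx0 ?eqxx // in_setD1 eq_sym ij.
Qed.

End MinimalSections.

Theorem mainTheorem8 (Sigma : finType) (n : nat)
  (delta : Sigma -> 'I_n.+1 -> 'I_n.+1)
  (k : nat) (d : 'I_k -> nat)
  (Phi : forall i : 'I_k, 'M[algC]_n -> 'M[algC]_(d i))
  (C : {set 'I_k}) :
  synchronizing delta ->
  wedderburn_data delta Phi ->
  minimal_core (theta delta Phi) C ->
  exists s : seq (seq Sigma * seq Sigma),
    (forall p, p \in s -> v_minimal (theta delta Phi) p.1 p.2) /\
    C \subset \bigcup_(p <- s) supp (theta delta Phi) p.2.
Proof.
move=> _ _ minC; apply: cover_by_finite_family => i iC.
exact: minimal_core_section minC iC.
Qed.
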